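(* Under Friends Appreciation, consider instances with $n$ agents in which every agent has at least one friend. Let $\textsf{WeaklyConn}$ be the algorithm that returns the partition of $\mathcal{N}$ whose coalitions are the vertex sets of the weakly connected components of the friendship graph $G^f$. Then for every such instance $\mathcal{I}$, $\mathrm{opt}(\mathcal{I})/\mathsf{ESW}(\textsf{WeaklyConn}(\mathcal{I}))\le 2-\frac{6}{n+3}$ if $f_{\min}\ge 2$, and $\le \frac{n}{2}$ in general (i.e. when $f_{\min}=1$).
   Context: A friends-and-enemies instance consists of a set of agents $\mathcal{N}=\{1,\dots,n\}$ and, for each agent $i$, a set of friends $F_i\subseteq \mathcal{N}\setminus\{i\}$; the enemies of $i$ are $E_i=\mathcal{N}\setminus(F_i\cup\{i\})$. An outcome is a partition $\pi$ of $\mathcal{N}$. Under Friends Appreciation, $u_i(C)=|C\cap F_i|-\frac{1}{n}|C\cap E_i|$ for a coalition $C\ni i$, $u_i(\pi)$ is $i$'s utility for her coalition in $\pi$, $\mathsf{ESW}(\pi)=\min_i u_i(\pi)$, and $\mathrm{opt}$ is the maximum of $\mathsf{ESW}$ over all partitions. The friendship graph $G^f$ is the directed graph on $\mathcal{N}$ with an arc $(i,j)$ iff $j\in F_i$. $f_{\min}=\min_i |F_i|$. *)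

From HB Require Import structures.
From mathcomp Require Import all_boot all_order all_algebra.
Set Implicit Arguments. Unset Strict Implicit. Unset Printing Implicit Defensive.
Import Order.TTheory GRing.Theory Num.Theory.
Local Open Scope ring_scope.

(* Agents are 'I_n; F i is the set of friends of agent i (i \notin F i). *)
Section FE.
Variable n : nat.
Variable F : 'I_n -> {set 'I_n}.

Definition enemies (i : 'I_n) : {set 'I_n} := ~: (F i :|: [set i]).

Definition uFA (i : 'I_n) (C : {set 'I_n}) : rat :=
  (#|C :&: F i|)%:R - (#|C :&: enemies i|)%:R / n%:R.

Definition uP (P : {set {set 'I_n}}) (i : 'I_n) : rat := uFA i (pblock P i).

(* egalitarian social welfare: minimum utility over all agents.
   The neutral element n%:R is a strict upper bound on every utility,
   so it never affects the minimum when n >= 1. *)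
Definition ESW (P : {set {set 'I_n}}) : rat :=
  \big[Num.min/(n%:R : rat)]_(i : 'I_n) uP P i.

Definition is_partition (P : {set {set 'I_n}}) : bool := partition P [set: 'I_n].

(* optimum ESW over all partitions of N (the singleton partition has ESW 0,
   so 0 is a valid neutral element for the maximum) *)
Definition opt : rat :=
  \big[Num.max/0]_(P : {set {set 'I_n}} | is_partition P) ESW P.

Definition fr_sym : rel 'I_n := fun i j => (j \in F i) || (i \in F j).

Definition WeaklyConn : {set {set 'I_n}} :=
  equivalence_partition (connect fr_sym) [set: 'I_n].

Definition valid_instance : Prop := forall i : 'I_n, i \notin F i.
End FE.

(* An agent i of WeaklyConn shares her coalition with all of her k_i friends,
   so her utility is at least k_i - (n - 1 - k_i)/n, while no partition gives
   her more than k_i; hence opt / ESW(WeaklyConn) <= k_i / (k_i - (n-1-k_i)/n)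
   for the agent attaining ESW.  This ratio equals n k/((n+1)k - n + 1) and
   decreases in k, so its value at k = f_min bounds the approximation ratio:
   n/2 for f_min = 1 and 2n/(n+3) = 2 - 6/(n+3) for f_min = 2. *)
From HB Require Import structures.
From mathcomp Require Import all_boot all_order all_algebra.
From mathcomp Require Import ring lra zify.
Import Order.TTheory GRing.Theory Num.Theory.
Local Open Scope ring_scope.

Section RatioArithmetic.
Context {R : realFieldType}.
Implicit Types N m k x : R.

(* The smallest utility of an agent with k friends among N agents whose
   coalition contains all her friends: every other agent is an enemy in it. *)
Definition all_friends_utility N k : R := k - (N - 1 - k) / N.

Definition wc_ratio_bound N m : R := N * m / ((N + 1) * m - N + 1).

Lemma all_friends_utility_gt0 N k :
  0 < N -> 1 <= k -> 0 < all_friends_utility N k.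
Proof.
move=> N_gt0 k_ge1; rewrite /all_friends_utility subr_gt0.
by rewrite ltr_pdivrMr //; nra.
Qed.

Lemma le_wc_ratio_bound_mul N m k x :
  1 <= N -> 1 <= m -> m <= k -> all_friends_utility N k <= x ->
  k <= wc_ratio_bound N m * x.
Proof.
move=> N_ge1 m_ge1 le_mk ux.
have D_gt0 : 0 < (N + 1) * m - N + 1 by nra.
have B_ge0 : 0 <= wc_ratio_bound N m.
  by rewrite /wc_ratio_bound divr_ge0 ?ltW //; nra.
apply: le_trans (ler_wpM2l B_ge0 ux).
have -> : wc_ratio_bound N m * all_friends_utility N k
        = m * ((N + 1) * k - N + 1) / ((N + 1) * m - N + 1).
  rewrite /wc_ratio_bound /all_friends_utility.
  by field; rewrite !gt_eqF //; lra.
(* The cross-multiplied difference is (k - m)(N - 1) >= 0. *)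
by rewrite ler_pdivlMr //; nra.
Qed.

Lemma wc_ratio_bound1 N : wc_ratio_bound N 1 = N / 2.
Proof. by rewrite /wc_ratio_bound mulr1; congr (_ / _); ring. Qed.

Lemma wc_ratio_bound2 N : 0 <= N -> wc_ratio_bound N 2 = 2 - 6 / (N + 3).
Proof. by move=> N_ge0; rewrite /wc_ratio_bound; field; lra. Qed.

End RatioArithmetic.

Section WeaklyConn.
Variable n : nat.
Variable F : 'I_n -> {set 'I_n}.

Lemma connect_fr_sym_equivalence :
  {in [set: 'I_n] & &, equivalence_rel (connect (fr_sym F))}.
Proof.
move=> x y z _ _ _; split; first exact: connect0.
move=> cxy; apply/idP/idP => [cxz | cyz]; last exact: connect_trans cxy cyz.
apply: connect_trans cxz; rewrite sym_connect_sym //.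
by move=> a b; rewrite /fr_sym orbC.
Qed.

Lemma friends_sub_pblock_WeaklyConn i : F i \subset pblock (WeaklyConn F) i.
Proof.
apply/subsetP => j Fij.
rewrite /WeaklyConn pblock_equivalence_partition ?inE //;
  last exact: connect_fr_sym_equivalence.
by apply: connect1; rewrite /fr_sym Fij.
Qed.

Lemma card_enemies i :
  i \notin F i -> (#|enemies F i| + #|F i| + 1)%N = n.
Proof.
move=> Fi'i; have := cardsC (F i :|: [set i]).
by rewrite /enemies setUC cardsU1 Fi'i card_ord; lia.
Qed.

Lemma uP_le_friends P i : uP F P i <= #|F i|%:R.
Proof.
rewrite /uP /uFA.
have le_friends : #|pblock P i :&: F i|%:R <= #|F i|%:R :> rat.
  by rewrite ler_nat; apply/subset_leq_card/subsetIr.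
have enemies_ge0 : 0 <= #|pblock P i :&: enemies F i|%:R / n%:R :> rat.
  by rewrite divr_ge0 ?ler0n.
lra.
Qed.

Lemma opt_le_friends i : opt F <= #|F i|%:R.
Proof.
rewrite /opt; elim/big_ind: _ => // [x y | P _]; first by rewrite ge_max => ->.
by apply: le_trans (uP_le_friends P i); rewrite /ESW bigmin_le.
Qed.

Lemma ESW_attained P : (0 < n)%N -> exists i, ESW F P = uP F P i.
Proof.
move=> n_gt0; rewrite /ESW (bigmin_eq_arg _ (Ordinal n_gt0)) //; first by eexists.
move=> i _; apply: le_trans (uP_le_friends P i) _.
by rewrite ler_nat -[X in (_ <= X)%N]card_ord max_card.
Qed.

Lemma ESW_no_agents P : n = 0%N -> ESW F P = 0.
Proof. by move=> n0; rewrite /ESW; subst n; rewrite big_ord0. Qed.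

Lemma all_friends_utility_le_uP_WeaklyConn i :
  i \notin F i -> all_friends_utility n%:R #|F i|%:R <= uP F (WeaklyConn F) i.
Proof.
move=> Fi'i; rewrite /uP /uFA /all_friends_utility.
rewrite (setIidPr (friends_sub_pblock_WeaklyConn i)) lerD2l lerN2.
rewrite ler_wpM2r ?invr_ge0 ?ler0n //.
have le_enemies : (#|pblock (WeaklyConn F) i :&: enemies F i| <= #|enemies F i|)%N.
  exact/subset_leq_card/subsetIr.
have n_eq : n%:R = #|enemies F i|%:R + #|F i|%:R + 1 :> rat.
  by rewrite -[1]/(1%:R) -!natrD card_enemies.
rewrite -(ler_nat rat) in le_enemies; lra.
Qed.

Lemma opt_div_ESW_WeaklyConn_le (m : nat) :
  (forall i, i \notin F i) -> (0 < m)%N -> (forall i, m <= #|F i|)%N ->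
  opt F / ESW F (WeaklyConn F) <= wc_ratio_bound n%:R m%:R.
Proof.
move=> irrefl m_gt0 m_le_friends.
have [n0 | n_gt0] := posnP n.
  by rewrite ESW_no_agents // invr0 mulr0 /wc_ratio_bound n0 !mul0r.
have [i ->] := ESW_attained (WeaklyConn F) n_gt0.
have u_le := all_friends_utility_le_uP_WeaklyConn _ (irrefl i).
have u_gt0 : 0 < uP F (WeaklyConn F) i.
  by apply: lt_le_trans u_le; rewrite all_friends_utility_gt0 ?ltr0n ?ler1n //;
    apply: leq_trans (m_le_friends i).
rewrite ler_pdivrMr //; apply: le_trans (opt_le_friends i) _.
by apply: le_wc_ratio_bound_mul; rewrite ?ler1n ?ler_nat.
Qed.

End WeaklyConn.

Theorem theorem5 (n : nat) (F : 'I_n -> {set 'I_n}) :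
  (forall i : 'I_n, i \notin F i) ->
  (forall i : 'I_n, 0 < #|F i|)%N ->
  ((forall i : 'I_n, 2 <= #|F i|)%N ->
     opt F / ESW F (WeaklyConn F) <= 2 - 6 / (n%:R + 3))
  /\ opt F / ESW F (WeaklyConn F) <= n%:R / 2.
Proof.
move=> irrefl friends_gt0; split.
  by move=> two_le; rewrite -wc_ratio_bound2 ?ler0n //;
    exact: (opt_div_ESW_WeaklyConn_le _ _ 2%N).
by rewrite -wc_ratio_bound1; exact: (opt_div_ESW_WeaklyConn_le _ _ 1%N).
Qed.
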